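(* For all $A,B\subseteq[n]$ the operators $\Gamma_A$ satisfy $$\{\Gamma_A,\Gamma_B\}=\Gamma_{(A\cup B)\setminus(A\cap B)}+2\,\Gamma_{A\cap B}\Gamma_{A\cup B}+2\,\Gamma_{A\setminus(A\cap B)}\Gamma_{B\setminus(A\cap B)},$$ where $\{X,Y\}=XY+YX$. (Here $\Gamma_\emptyset=-\tfrac12$ and $\Gamma_{\{k\}}=\mu_k$ are scalars.)
   Context: Fix $n\ge1$ and real parameters $\mu_1,\dots,\mu_n>0$; write $[n]=\{1,\dots,n\}$. For $i\in[n]$, $r_i$ is the reflection $(r_if)(x)=f(x_1,\dots,-x_i,\dots,x_n)$ and $T_i=\partial_{x_i}+\frac{\mu_i}{x_i}(1-r_i)$. $\mathcal{C}\ell_n$ is generated by $e_1,\dots,e_n$ with $e_ie_j+e_je_i=-2\delta_{ij}$, $V$ is a fixed left $\mathcal{C}\ell_n$-module, and operators act on $\mathcal{P}(\mathbb{R}^n)\otimes V$ with $x_i,T_i,r_i$ acting on the polynomial factor and $e_i$ on $V$. For $A\subseteq[n]$: $\underline{D}_A=\sum_{i\in A}e_iT_i$, $\underline{x}_A=\sum_{i\in A}e_ix_i$, $\underline{S}_A=\frac12([\underline{x}_A,\underline{D}_A]-1)$, $\Gamma_A=\underline{S}_A\prod_{i\in A}r_i$ (empty sums $0$, empty products $1$). *)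

From HB Require Import structures.
From mathcomp Require Import all_boot all_order all_algebra.
Set Implicit Arguments. Unset Strict Implicit. Unset Printing Implicit Defensive.
Import Order.TTheory GRing.Theory Num.Theory.
Local Open Scope ring_scope.

(* Elements of P(R^n) (x) V are represented by their coefficient maps:
   f : mono n -> V, f beta = V-coefficient of the monomial x^beta.
   (Finite support is imposed as a hypothesis in the theorem.) *)
Definition mono (n : nat) := 'I_n -> nat.
Definition PV (n : nat) (V : Type) := mono n -> V.

Section Ops.
Variables (R : realFieldType) (n : nat) (V : lmodType R).
Variables (mu : 'I_n -> R) (e : 'I_n -> V -> V).

Definition shift_up (i : 'I_n) (b : mono n) : mono n :=
  fun j => if j == i then (b j).+1 else b j.
Definition shift_down (i : 'I_n) (b : mono n) : mono n :=
  fun j => if j == i then (b j).-1 else b j.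

Definition padd (f g : PV n V) : PV n V := fun b => f b + g b.
Definition psub (f g : PV n V) : PV n V := fun b => f b - g b.
Definition pscale (a : R) (f : PV n V) : PV n V := fun b => a *: f b.

Definition mulx (i : 'I_n) (f : PV n V) : PV n V :=
  fun b => if (0 < b i)%N then f (shift_down i b) else 0.
Definition refl (i : 'I_n) (f : PV n V) : PV n V :=
  fun b => (-1) ^+ (b i) *: f b.
Definition pderiv (i : 'I_n) (f : PV n V) : PV n V :=
  fun b => (b i).+1%:R *: f (shift_up i b).
(* exact division by x_i (applied only to polynomials divisible by x_i) *)
Definition divx (i : 'I_n) (g : PV n V) : PV n V :=
  fun b => g (shift_up i b).
Definition dunkl (i : 'I_n) (f : PV n V) : PV n V :=
  padd (pderiv i f) (pscale (mu i) (divx i (psub f (refl i f)))).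
Definition cl (i : 'I_n) (f : PV n V) : PV n V := fun b => e i (f b).

Definition DA (A : {set 'I_n}) (f : PV n V) : PV n V :=
  fun b => \sum_(i in A) cl i (dunkl i f) b.
Definition xA (A : {set 'I_n}) (f : PV n V) : PV n V :=
  fun b => \sum_(i in A) cl i (mulx i f) b.
Definition SA (A : {set 'I_n}) (f : PV n V) : PV n V :=
  pscale (2%:R)^-1 (psub (psub (xA A (DA A f)) (DA A (xA A f))) f).
Definition reflA (A : {set 'I_n}) (f : PV n V) : PV n V :=
  foldr refl f (enum A).
Definition Gamma (A : {set 'I_n}) (f : PV n V) : PV n V := SA A (reflA A f).

End Ops.

Definition finsupp (n : nat) (V : zmodType) (f : PV n V) : Prop :=
  exists N : nat, forall b : mono n, f b != 0 -> forall j, (b j < N)%N.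

(* In the ring of additive operators on P(R^n) (x) V we have
   Gamma_X = S(x_X, D_X) R_X, where S(x, D) = 1/2 ([x, D] - 1) and R_X = prod_{i in X} r_i.
   Split A = P u C and B = C u Q with C = A n B.  On disjoint blocks x, D and R are additive
   resp. multiplicative, and S(x_X + x_Y, D_X + D_Y) = S_X + S_Y + 1/2 + x_X D_Y + x_Y D_X.
   As R_X anticommutes with x_X, D_X and commutes with the x, D of the other blocks, every
   reflection can be moved to the right, where they all collapse to R_P R_Q.  What remains is
   an identity in the algebra generated by three blocks whose x's and D's anticommute across
   blocks; within the block C it only needs the osp(1|2) relations
   {x_C, [x_C, D_C]} = 2 x_C and {D_C, [x_C, D_C]} = 2 D_C, i.e. that S_C anticommutes with
   x_C and D_C. *)

From HB Require Import structures.
From mathcomp Require Import all_boot all_order all_algebra.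
From mathcomp Require Import ring.
From mathcomp Require boolp.
Import Order.TTheory GRing.Theory Num.Theory.
Set Implicit Arguments. Unset Strict Implicit. Unset Printing Implicit Defensive.
Local Open Scope ring_scope.
Local Notation comm := GRing.comm.

(* A reflective decision procedure for equalities in an additive group, with
   every subterm that is not a sum, an opposite or zero treated as an atom.
   Noncommutative ring identities are proved by expanding products and then
   calling [abel]. *)
Inductive zexpr := ZAtom of nat | ZAdd of zexpr & zexpr | ZOpp of zexpr | ZZero.

(* The coefficient of an atom, as a pair (positive part, negative part). *)
Fixpoint zcoef (k : nat) (t : zexpr) : nat * nat :=
  match t with
  | ZAtom j => if j == k then (1, 0)%N else (0, 0)%N
  | ZAdd a b => ((zcoef k a).1 + (zcoef k b).1, (zcoef k a).2 + (zcoef k b).2)%N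
  | ZOpp a => ((zcoef k a).2, (zcoef k a).1)
  | ZZero => (0, 0)%N
  end.

Fixpoint zatoms_lt (N : nat) (t : zexpr) : bool :=
  match t with
  | ZAtom j => (j < N)%N
  | ZAdd a b => zatoms_lt N a && zatoms_lt N b
  | ZOpp a => zatoms_lt N a
  | ZZero => true
  end.

Definition zexpr_eqb (N : nat) (t1 t2 : zexpr) : bool :=
  [&& zatoms_lt N t1, zatoms_lt N t2 &
   all (fun k => (zcoef k t1).1 + (zcoef k t2).2 == (zcoef k t2).1 + (zcoef k t1).2)%N
       (iota 0 N)].

Section ZexprEval.
Variables (M : zmodType) (env : seq M).

Fixpoint zeval (t : zexpr) : M :=
  match t with
  | ZAtom k => nth 0 env k
  | ZAdd a b => zeval a + zeval b
  | ZOpp a => - zeval a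
  | ZZero => 0
  end.

Let zcoefz (pq : nat * nat) : int := (pq.1)%:Z - (pq.2)%:Z.

Lemma zeval_sum N t : zatoms_lt N t ->
  zeval t = \sum_(k < N) nth 0 env k *~ zcoefz (zcoef k t).
Proof.
elim: t => [j|a iha b ihb|a iha|] /=.
- move=> hj; rewrite (bigD1 (Ordinal hj)) //= eqxx /zcoefz /= mulr1z big1 ?addr0 //.
  by move=> k /negbTE; rewrite -val_eqE /= eq_sym => ->; rewrite /zcoefz /= mulr0z.
- case/andP=> ha hb; rewrite iha // ihb // -big_split /=; apply: eq_bigr => k _.
  by rewrite -mulrzDr /zcoefz /= !PoszD opprD addrACA.
- move=> ha; rewrite iha // -sumrN; apply: eq_bigr => k _.
  by rewrite -mulrNz /zcoefz /= opprB.
- by move=> _; rewrite big1 // => k _; rewrite /zcoefz /= mulr0z.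
Qed.

Lemma zexpr_eqbP N t1 t2 : zexpr_eqb N t1 t2 -> zeval t1 = zeval t2.
Proof.
case/and3P=> h1 h2 /allP hcoef; rewrite (zeval_sum h1) (zeval_sum h2).
apply: eq_bigr => k _; congr (_ *~ _).
have := hcoef k; rewrite mem_iota add0n ltn_ord => /(_ isT) /eqP E.
rewrite /zcoefz; apply/eqP; rewrite subr_eq addrAC eq_sym subr_eq -!PoszD.
by rewrite addnC E addnC.
Qed.

End ZexprEval.

Ltac zconv_test t u :=
  constr:(ltac:(first [unify t u; exact true | exact false]) : bool).

Ltac zatom_insert t l :=
  lazymatch l with
  | @nil ?T => constr:(@cons T t (@nil T))
  | @cons ?T ?u ?l' =>
    let b := zconv_test t u in
    lazymatch b with
    | true => l
    | false => let l'' := zatom_insert t l' in constr:(@cons T u l'')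
    end
  end.

Ltac zatoms t l :=
  lazymatch t with
  | GRing.add ?a ?b => let l := zatoms a l in zatoms b l
  | GRing.opp ?a => zatoms a l
  | GRing.zero => l
  | _ => zatom_insert t l
  end.

Ltac zatom_index t l :=
  lazymatch l with
  | cons ?u ?l' =>
    let b := zconv_test t u in
    lazymatch b with
    | true => constr:(0%N)
    | false => let k := zatom_index t l' in constr:(S k)
    end
  end.

Ltac zreify t l :=
  lazymatch t with
  | GRing.add ?a ?b =>
    let ra := zreify a l in let rb := zreify b l in constr:(ZAdd ra rb)
  | GRing.opp ?a => let ra := zreify a l in constr:(ZOpp ra)
  | GRing.zero => constr:(ZZero)
  | _ => let k := zatom_index t l in constr:(ZAtom k)
  end.

Ltac abel :=
  lazymatch goal with
  | |- @eq ?T ?t1 ?t2 =>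
    let l := zatoms t1 (@nil T) in
    let l := zatoms t2 l in
    let r1 := zreify t1 l in
    let r2 := zreify t2 l in
    change (zeval l r1 = zeval l r2);
    apply: (@zexpr_eqbP _ l (size l)); vm_compute; reflexivity
  end.

Ltac expand_products :=
  do 4 rewrite ?mulrDl ?mulrDr ?mulrBl ?mulrBr ?mulNr ?mulrN ?opprK ?opprD ?opprB
               ?mulrA ?mul1r ?mulr1 ?mul0r ?mulr0.

Section Anticommutation.
Variable Rg : pzRingType.
Implicit Types a b c e m x y z : Rg.

Definition anticomm x y := x * y = - (y * x).

Lemma anticommr_sym x y : anticomm x y -> anticomm y x.
Proof. by rewrite /anticomm => ->; rewrite opprK. Qed.

Lemma anticommr0 x : anticomm x 0.
Proof. by rewrite /anticomm mulr0 mul0r oppr0. Qed.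

Lemma anticommrN x y : anticomm x y -> anticomm x (- y).
Proof. by rewrite /anticomm => hy; rewrite mulrN mulNr hy. Qed.

Lemma anticommrD x y z : anticomm x y -> anticomm x z -> anticomm x (y + z).
Proof. by rewrite /anticomm => hy hz; rewrite mulrDr mulrDl hy hz opprD. Qed.

Lemma anticommrB x y z : anticomm x y -> anticomm x z -> anticomm x (y - z).
Proof. by move=> hy hz; apply/anticommrD/anticommrN. Qed.

Lemma anticommr_sum (I : Type) (s : seq I) (P : pred I) (F : I -> Rg) x :
  (forall i, P i -> anticomm x (F i)) -> anticomm x (\sum_(i <- s | P i) F i).
Proof.
by move=> hF; apply: (big_ind (anticomm x)) => //; [exact: anticommr0 | exact: anticommrD].
Qed.

Lemma anticomm_sum (I : Type) (s1 s2 : seq I) (P Q : pred I) (F G : I -> Rg) :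
  (forall i j, P i -> Q j -> anticomm (F i) (G j)) ->
  anticomm (\sum_(i <- s1 | P i) F i) (\sum_(j <- s2 | Q j) G j).
Proof.
move=> hFG; apply/anticommr_sym/anticommr_sum => j Qj.
by apply/anticommr_sym/anticommr_sum => i Pi; apply: hFG.
Qed.

Lemma commr_antiM x y z : anticomm x y -> anticomm x z -> comm x (y * z).
Proof.
by rewrite /comm /anticomm => hy hz; rewrite mulrA hy mulNr -mulrA hz mulrN opprK mulrA.
Qed.

Lemma anticommrMl x y z : anticomm x y -> comm x z -> anticomm x (y * z).
Proof. by rewrite /comm /anticomm => hy hz; rewrite mulrA hy mulNr -mulrA hz mulrA. Qed.

Lemma anticommrMr x y z : comm x y -> anticomm x z -> anticomm x (y * z).
Proof. by rewrite /comm /anticomm => hy hz; rewrite mulrA hy -mulrA hz mulrN mulrA. Qed.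

Lemma mulr_comm_anticomm x y z : comm x y -> anticomm x z -> x * (y + z) = (y - z) * x.
Proof. by rewrite /comm /anticomm => hy hz; rewrite mulrDr hy hz mulrBl. Qed.

Lemma mulr_swap_mid x y z r r' : r * y = z * r -> (x * r) * (y * r') = (x * z) * (r * r').
Proof. by move=> hr; rewrite mulrA -[x * r * y]mulrA hr !mulrA. Qed.

Lemma mulr_anticommA m x y : anticomm x y -> m * x * y = - (m * y * x).
Proof. by rewrite /anticomm => hxy; rewrite -mulrA hxy mulrN mulrA. Qed.

Lemma anticomm_prod_mid a b c e :
  anticomm e a -> anticomm c a -> anticomm e b ->
  a * b * (c * e) + c * e * (a * b) = a * (b * c - c * b) * e.
Proof.
move=> hea hca heb; rewrite mulrBr mulrBl !mulrA (mulr_anticommA _ hea) hca.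
by rewrite !mulNr opprK (mulr_anticommA _ heb).
Qed.

Lemma anticomm_prod_shared_r a b c :
  anticomm a b -> anticomm c b -> anticomm a c -> a * b * (c * b) + c * b * (a * b) = 0.
Proof.
move=> hab hcb hac; rewrite !mulrA (mulr_anticommA _ (anticommr_sym hab)) (anticommr_sym hac).
by rewrite (mulr_anticommA _ (anticommr_sym hcb)) !mulNr opprK addNr.
Qed.

Lemma anticomm_prod_shared_l a b c :
  anticomm a b -> anticomm a c -> anticomm b c -> a * b * (a * c) + a * c * (a * b) = 0.
Proof.
move=> hab hac hbc; rewrite !mulrA (mulr_anticommA _ (anticommr_sym hab)).
by rewrite (mulr_anticommA _ (anticommr_sym hac)) !mulNr (mulr_anticommA _ hbc) opprK addrN.
Qed.

Lemma mulr_commA m x y : comm x y -> m * x * y = m * y * x.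
Proof. by move=> hxy; rewrite -mulrA hxy mulrA. Qed.

Lemma anticomm_mul_pair (e1 e2 : Rg) a b :
  anticomm e1 e2 -> comm a e2 -> comm b e1 -> comm a b -> anticomm (e1 * a) (e2 * b).
Proof.
move=> he ha hb hab; rewrite /anticomm !mulrA (mulr_commA _ ha) (mulr_commA _ hb) he.
by rewrite !mulNr (mulr_commA _ (commr_sym hab)).
Qed.

Lemma mulr3_sqrN1 e a b c : e * e = -1 -> comm a e -> comm b e ->
  e * a * (e * b) * (e * c) = - (e * (a * b * c)).
Proof.
by move=> hee ha hb; rewrite !mulrA (mulr_commA _ ha) hee mulN1r !mulNr (mulr_commA _ hb) ha.
Qed.

End Anticommutation.

Section AnticommutingSums.
Variable Rg : pzRingType.

Lemma sqr_sum_anticomm (I : eqType) (s : seq I) (F : I -> Rg) : uniq s ->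
  {in s &, forall i j, i != j -> anticomm (F i) (F j)} ->
  (\sum_(i <- s) F i) * (\sum_(i <- s) F i) = \sum_(i <- s) F i * F i.
Proof.
elim: s => [|a s IH] /=; first by rewrite !big_nil mul0r.
case/andP=> as_ us hF; rewrite !big_cons.
have ha : anticomm (F a) (\sum_(i <- s) F i).
  rewrite big_seq_cond; apply: anticommr_sum => j /andP [js _].
  by apply: hF; rewrite ?inE ?eqxx ?js ?orbT //; apply: contraNneq as_ => ->.
have hFs : {in s &, forall i j, i != j -> anticomm (F i) (F j)}.
  by move=> i j is_ js; apply: hF; rewrite inE ?is_ ?js orbT.
by rewrite mulrDl !mulrDr IH // ha; abel.
Qed.

Lemma sum_osp (I : eqType) (s : seq I) (F G : I -> Rg) : uniq s ->
  {in s &, forall i j, i != j -> anticomm (F i) (F j)} ->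
  {in s &, forall i j, i != j -> anticomm (F i) (G j)} ->
  let x := \sum_(i <- s) F i in let d := \sum_(i <- s) G i in
  x * x * d - d * x * x = \sum_(i <- s) (F i * F i * G i - G i * F i * F i).
Proof.
move=> us hFF hFG x d.
rewrite -[d * _ * _]mulrA sqr_sum_anticomm // mulr_suml mulr_sumr -sumrB.
rewrite big_seq [RHS]big_seq; apply: eq_bigr => i is_.
rewrite /d mulr_sumr mulr_suml -sumrB (bigD1_seq i) //= big_seq_cond big1 ?addr0 ?mulrA //.
move=> j /andP [js ji]; apply/eqP; rewrite subr_eq0; apply/eqP.
by apply/commr_sym/commr_antiM; apply/anticommr_sym/hFG; rewrite // eq_sym.
Qed.

End AnticommutingSums.

Section HalfCommutator.
Variables (Rg : pzRingType) (h : Rg).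
Hypotheses (h_central : forall a, comm h a) (h_half : h + h = 1).

Definition Sop (x d : Rg) := h * (x * d - d * x - 1).

Lemma half_twice a : h * a + h * a = a.
Proof. by rewrite -mulrDl h_half mul1r. Qed.

Lemma Sop_add x y d e : anticomm x e -> anticomm y d ->
  Sop (x + y) (d + e) = Sop x d + Sop y e + h + x * e + y * d.
Proof.
move=> hxe hyd; rewrite -[x * e]half_twice -[y * d]half_twice /Sop.
expand_products; rewrite -[h * e * x]mulrA -[h * d * y]mulrA.
by rewrite (anticommr_sym hxe) (anticommr_sym hyd); expand_products; abel.
Qed.

Lemma commr_Sop y x d : comm y x -> comm y d -> comm y (Sop x d).
Proof.
move=> hx hd; apply: commrM; first exact/commr_sym/h_central.
by apply: commrB; [apply: commrB; apply: commrM|apply: commr1].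
Qed.

Lemma commr_Sop_anti y x d : anticomm y x -> anticomm y d -> comm y (Sop x d).
Proof.
move=> hx hd; apply: commrM; first exact/commr_sym/h_central.
by apply: commrB; [apply: commrB; apply: commr_antiM|apply: commr1].
Qed.

Lemma anticommr_Sop u x d :
  u * (x * d - d * x) + (x * d - d * x) * u = u + u -> anticomm u (Sop x d).
Proof.
move=> hu; apply/eqP; rewrite /Sop -addr_eq0 mulrA -h_central -!mulrA -mulrDr.
by rewrite mulrBr mulrBl mulr1 mul1r addrACA -opprD hu subrr mulr0.
Qed.

Lemma anticomm_Sop_l x d : x * x * d - d * x * x = x + x -> anticomm x (Sop x d).
Proof. by move=> hx; apply: anticommr_Sop; rewrite mulrBr mulrBl !mulrA -hx; abel. Qed.

Lemma anticomm_Sop_r x d : x * d * d - d * d * x = d + d -> anticomm d (Sop x d).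
Proof. by move=> hd; apply: anticommr_Sop; rewrite mulrBr mulrBl !mulrA -hd; abel. Qed.

Lemma Sop_twice x d : x * d - d * x = Sop x d + Sop x d + 1.
Proof. by rewrite /Sop half_twice subrK. Qed.

Lemma twice_mul_shifted p q t : comm p q ->
  (p + q + h) * (q + t + h) + (p + q + h) * (q + t + h) =
  (p + t + h) + (q * (p + q + h + t + h) + q * (p + q + h + t + h)) + (p * t + p * t).
Proof.
move=> hpq.
transitivity ((h * p + h * p) + (h * t + h * t) + (h * h + h * h) +
  (q * (p + q + h + t + h) + q * (p + q + h + t + h)) + (p * t + p * t)).
  by expand_products; rewrite -?(h_central p) -?(h_central q) -?(h_central t) ?hpq; abel.
by rewrite !half_twice.
Qed.

End HalfCommutator.

(* Blocks 1, 2, 3 play the roles of A \ B, A n B and B \ A; note that [r1] and [r3] need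
   not be involutions and that the osp(1|2) relations are only used for the middle block. *)
Section ThreeBlocks.
Variables (Rg : pzRingType) (h : Rg).
Hypotheses (h_central : forall a, comm h a) (h_half : h + h = 1).
Variables x1 x2 x3 d1 d2 d3 r1 r2 r3 : Rg.
Hypotheses (r2_sqr : r2 * r2 = 1)
  (r12 : comm r1 r2) (r13 : comm r1 r3) (r23 : comm r2 r3)
  (r2x2 : anticomm r2 x2) (r2d2 : anticomm r2 d2)
  (r1x2 : comm r1 x2) (r1d2 : comm r1 d2) (r1x3 : comm r1 x3) (r1d3 : comm r1 d3)
  (r2x1 : comm r2 x1) (r2d1 : comm r2 d1) (r2x3 : comm r2 x3) (r2d3 : comm r2 d3)
  (r3x1 : comm r3 x1) (r3d1 : comm r3 d1) (r3x2 : comm r3 x2) (r3d2 : comm r3 d2)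
  (x1x2 : anticomm x1 x2) (x1x3 : anticomm x1 x3) (x2x3 : anticomm x2 x3)
  (d1d2 : anticomm d1 d2) (d1d3 : anticomm d1 d3) (d2d3 : anticomm d2 d3)
  (x1d2 : anticomm x1 d2) (x1d3 : anticomm x1 d3) (x2d1 : anticomm x2 d1)
  (x2d3 : anticomm x2 d3) (x3d1 : anticomm x3 d1) (x3d2 : anticomm x3 d2)
  (osp2x : x2 * x2 * d2 - d2 * x2 * x2 = x2 + x2)
  (osp2d : x2 * d2 * d2 - d2 * d2 * x2 = d2 + d2).

Local Notation s1 := (Sop h x1 d1).
Local Notation s2 := (Sop h x2 d2).
Local Notation s3 := (Sop h x3 d3).
Local Notation S12 := (s1 + s2 + h).
Local Notation S23 := (s2 + s3 + h).
Local Notation U12 := (x1 * d2 + x2 * d1).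
Local Notation U23 := (x2 * d3 + x3 * d2).
Local Notation U13 := (x1 * d3 + x3 * d1).

Local Ltac comm_solve := solve [ first [ assumption
  | apply: commr_sym; assumption | apply: anticommr_sym; assumption
  | exact: commr_refl | exact: commr1 | apply: commr_sym; exact: commr1
  | exact: h_central | apply: commr_sym; exact: h_central
  | comm_split | apply: commr_sym; comm_split | apply: anticommr_sym; comm_split ] ]
with comm_split := lazymatch goal with
  | |- comm _ (_ - _) => apply: commrB; comm_solve
  | |- comm _ (_ + _) => apply: commrD; comm_solve
  | |- comm _ (- _) => apply: commrN; comm_solve
  | |- comm _ (_ * _) => first [apply: commrM; comm_solve | apply: commr_antiM; comm_solve]
  | |- comm _ (Sop _ _ _) =>
    first [apply: commr_Sop; comm_solve | apply: commr_Sop_anti; comm_solve]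
  | |- anticomm _ (_ - _) => apply: anticommrB; comm_solve
  | |- anticomm _ (_ + _) => apply: anticommrD; comm_solve
  | |- anticomm _ (- _) => apply: anticommrN; comm_solve
  | |- anticomm _ (_ * _) =>
    first [apply: anticommrMl; comm_solve | apply: anticommrMr; comm_solve]
  | |- anticomm ?u (Sop _ ?u _) => apply: anticomm_Sop_l; assumption
  | |- anticomm ?u (Sop _ _ ?u) => apply: anticomm_Sop_r; assumption
  end.

Lemma Sop12 : Sop h (x1 + x2) (d1 + d2) = S12 + U12.
Proof. by rewrite Sop_add // addrA. Qed.

Lemma Sop23 : Sop h (x2 + x3) (d2 + d3) = S23 + U23.
Proof. by rewrite Sop_add // addrA. Qed.

Lemma Sop13 : Sop h (x1 + x3) (d1 + d3) = s1 + s3 + h + U13.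
Proof. by rewrite Sop_add // addrA. Qed.

Lemma Sop123 : Sop h (x1 + x2 + x3) (d1 + d2 + d3) = S12 + s3 + h + U13 + (U12 + U23).
Proof. by rewrite Sop_add ?Sop12; [expand_products; abel|comm_solve..]. Qed.

Lemma offdiag_anticomm : U12 * U23 + U23 * U12 = - ((s2 + s2 + 1) * U13).
Proof.
have -> : U12 * U23 + U23 * U12 =
    (x1 * d2 * (x2 * d3) + x2 * d3 * (x1 * d2)) + (x1 * d2 * (x3 * d2) + x3 * d2 * (x1 * d2))
  + (x2 * d1 * (x2 * d3) + x2 * d3 * (x2 * d1)) + (x3 * d2 * (x2 * d1) + x2 * d1 * (x3 * d2)).
  by rewrite !mulrDl !mulrDr; abel.
rewrite anticomm_prod_mid ?anticomm_prod_shared_r ?anticomm_prod_shared_l ?anticomm_prod_mid;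
  try comm_solve.
have [hx1 hx3] : comm (s2 + s2 + 1) x1 /\ comm (s2 + s2 + 1) x3 by split; comm_solve.
rewrite !addr0 -(opprB (x2 * d2)) (Sop_twice h_half) !mulrN !mulNr -hx1 -hx3.
by rewrite -!mulrA -opprD -mulrDr.
Qed.

Lemma three_block_core :
  (S12 + U12) * (S23 - U23) + (S23 + U23) * (S12 - U12) =
  (s1 + s3 + h + U13) + 2%:R * (s2 * ((S12 + s3 + h + U13) - (U12 + U23)))
  + 2%:R * (s1 * s3).
Proof.
have expand (p q u w : Rg) : (p + u) * (q - w) + (q + w) * (p - u) =
    (p * q + q * p) + (u * q - q * u) + (w * p - p * w) - (u * w + w * u).
  by expand_products; abel.
have commutator (u p q t : Rg) :
    u * (p + q + t) - (p + q + t) * u = (u * p - p * u) + (u * q - q * u) + (u * t - t * u).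
  by expand_products; abel.
have [U2 U3 Uh] : [/\ anticomm U12 s2, comm U12 s3 & comm U12 h] by split; comm_solve.
have [W1 W2 Wh] : [/\ comm U23 s1, anticomm U23 s2 & comm U23 h] by split; comm_solve.
have commU12 : U12 * S23 - S23 * U12 = - (s2 * U12 + s2 * U12).
  by rewrite commutator U2 U3 Uh !subrr !addr0 opprD.
have commU23 : U23 * S12 - S12 * U23 = - (s2 * U23 + s2 * U23).
  by rewrite commutator W1 W2 Wh !subrr add0r addr0 opprD.
have commS : comm S23 S12 by comm_solve.
rewrite expand commS commU12 commU23 offdiag_anticomm (twice_mul_shifted h_central h_half);
  last by comm_solve.
by rewrite !mulr_natl !mulr2n; expand_products; abel.
Qed.

Lemma three_block_identity :
  Sop h (x1 + x2) (d1 + d2) * (r1 * r2) * (Sop h (x2 + x3) (d2 + d3) * (r2 * r3))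
  + Sop h (x2 + x3) (d2 + d3) * (r2 * r3) * (Sop h (x1 + x2) (d1 + d2) * (r1 * r2))
  = Sop h (x1 + x3) (d1 + d3) * (r1 * r3)
  + 2%:R * (s2 * r2 * (Sop h (x1 + x2 + x3) (d1 + d2 + d3) * (r1 * r2 * r3)))
  + 2%:R * (s1 * r1 * (s3 * r3)).
Proof.
rewrite Sop12 Sop23 Sop13 Sop123.
have r12_23 : r1 * r2 * (S23 + U23) = (S23 - U23) * (r1 * r2).
  by apply: mulr_comm_anticomm; comm_solve.
have r23_12 : r2 * r3 * (S12 + U12) = (S12 - U12) * (r2 * r3).
  by apply: mulr_comm_anticomm; comm_solve.
have r2_123 : r2 * (S12 + s3 + h + U13 + (U12 + U23)) =
              (S12 + s3 + h + U13 - (U12 + U23)) * r2.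
  by apply: mulr_comm_anticomm; comm_solve.
have r1_3 : comm r1 s3 by comm_solve.
rewrite (mulr_swap_mid _ _ r12_23) (mulr_swap_mid _ _ r23_12) (mulr_swap_mid _ _ r2_123).
rewrite (mulr_swap_mid _ _ r1_3).
have -> : r1 * r2 * (r2 * r3) = r1 * r3 by rewrite mulrA -(mulrA r1) r2_sqr mulr1.
have -> : r2 * r3 * (r1 * r2) = r1 * r3.
  by rewrite r23 -mulrA (mulrA r2) -r12 -(mulrA r1) r2_sqr mulr1 -r13.
have -> : r2 * (r1 * r2 * r3) = r1 * r3.
  by rewrite !mulrA -r12 -(mulrA r1) r2_sqr mulr1.
by rewrite !(mulrA 2%:R _ (r1 * r3)) -!mulrDl three_block_core.
Qed.

End ThreeBlocks.

Lemma big_setU_disjoint (T : Type) (idx : T) (op : Monoid.com_law idx) (I : finType)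
    (X Y : {set I}) (F : I -> T) : [disjoint X & Y] ->
  \big[op/idx]_(i in X :|: Y) F i = op (\big[op/idx]_(i in X) F i) (\big[op/idx]_(i in Y) F i).
Proof. by move=> dXY; rewrite -bigU //; apply: eq_bigl => i; rewrite !inE. Qed.

Section AdditiveEndomorphisms.
Variables (R : realFieldType) (n : nat) (V : lmodType R).

Record pvEnd := PVEnd {
  pvEnd_app :> PV n V -> PV n V;
  pvEnd_padd : forall f g, pvEnd_app (padd f g) = padd (pvEnd_app f) (pvEnd_app g) }.

Lemma pvEnd_ext (a b : pvEnd) : (forall f x, a f x = b f x) -> a = b.
Proof.
case: a b => fa ha [fb hb] /= eqab.
have efab : fa = fb by apply/boolp.funext => f; apply/boolp.funext => x; exact: eqab.
by subst fb; congr PVEnd; apply: boolp.Prop_irrelevance.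
Qed.

HB.instance Definition _ := boolp.gen_eqMixin pvEnd.
HB.instance Definition _ := boolp.gen_choiceMixin pvEnd.

Program Definition pvEnd_zero : pvEnd := @PVEnd (fun f x => 0) _.
Next Obligation. by apply/boolp.funext => x; rewrite /padd addr0. Qed.
Program Definition pvEnd_opp (a : pvEnd) : pvEnd := @PVEnd (fun f x => - a f x) _.
Next Obligation. by apply/boolp.funext => x; rewrite pvEnd_padd /padd opprD. Qed.
Program Definition pvEnd_add (a b : pvEnd) : pvEnd := @PVEnd (fun f x => a f x + b f x) _.
Next Obligation. by apply/boolp.funext => x; rewrite !pvEnd_padd /padd addrACA. Qed.
Program Definition pvEnd_one : pvEnd := @PVEnd id _.
Program Definition pvEnd_mul (a b : pvEnd) : pvEnd := @PVEnd (fun f => a (b f)) _.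
Next Obligation. by rewrite !pvEnd_padd. Qed.

Lemma pvEnd_addA : associative pvEnd_add.
Proof. by move=> a b c; apply: pvEnd_ext => f x /=; rewrite addrA. Qed.
Lemma pvEnd_addC : commutative pvEnd_add.
Proof. by move=> a b; apply: pvEnd_ext => f x /=; rewrite addrC. Qed.
Lemma pvEnd_add0 : left_id pvEnd_zero pvEnd_add.
Proof. by move=> a; apply: pvEnd_ext => f x /=; rewrite add0r. Qed.
Lemma pvEnd_addN : left_inverse pvEnd_zero pvEnd_opp pvEnd_add.
Proof. by move=> a; apply: pvEnd_ext => f x /=; rewrite addNr. Qed.
HB.instance Definition _ :=
  GRing.isZmodule.Build pvEnd pvEnd_addA pvEnd_addC pvEnd_add0 pvEnd_addN.

Lemma pvEnd_mulA : associative pvEnd_mul. Proof. by move=> a b c; apply: pvEnd_ext. Qed.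
Lemma pvEnd_mul1 : left_id pvEnd_one pvEnd_mul. Proof. by move=> a; apply: pvEnd_ext. Qed.
Lemma pvEnd_mulr1 : right_id pvEnd_one pvEnd_mul. Proof. by move=> a; apply: pvEnd_ext. Qed.
Lemma pvEnd_mulDl : left_distributive pvEnd_mul +%R.
Proof. by move=> a b c; apply: pvEnd_ext. Qed.
Lemma pvEnd_mulDr : right_distributive pvEnd_mul +%R.
Proof. by move=> a b c; apply: pvEnd_ext => f x /=; rewrite pvEnd_padd. Qed.
HB.instance Definition _ := GRing.Zmodule_isPzRing.Build pvEnd
  pvEnd_mulA pvEnd_mul1 pvEnd_mulr1 pvEnd_mulDl pvEnd_mulDr.

Lemma pvEnd_addE (a b : pvEnd) f x : (a + b) f x = a f x + b f x.
Proof. by []. Qed.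

End AdditiveEndomorphisms.

Lemma disjoint_neq (T : finType) (X Y : {set T}) i j :
  [disjoint X & Y] -> i \in X -> j \in Y -> i != j.
Proof. by move=> dXY iX jY; apply: contraTneq jY => <-; rewrite (disjointFr dXY iX). Qed.

Section DunklOperators.
Variables (R : realFieldType) (n : nat) (V : lmodType R).
Variables (mu : 'I_n -> R) (e : 'I_n -> V -> V).
Hypothesis he_lin : forall i (a : R) (u v : V), e i (a *: u + v) = a *: e i u + e i v.
Hypothesis he_cl : forall i j (v : V), e i (e j v) + e j (e i v) = - ((2 * (i == j)%:R) *: v).
Local Notation pvEnd := (pvEnd n V).
Implicit Types (i j : 'I_n) (b : mono n) (f g : PV n V) (X Y : {set 'I_n}).

Lemma cliff0 i : e i 0 = 0.
Proof.
have := he_lin i 1 0 0; rewrite !scale1r addr0 => e00.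
by apply: (@addrI _ (e i 0)); rewrite addr0 -e00.
Qed.

Lemma cliffD i u v : e i (u + v) = e i u + e i v.
Proof. by have := he_lin i 1 u v; rewrite !scale1r. Qed.

Lemma cliffZ i a u : e i (a *: u) = a *: e i u.
Proof. by have := he_lin i a u 0; rewrite !addr0 cliff0 addr0. Qed.

Lemma cliff_sqr i v : e i (e i v) = - v.
Proof.
have := he_cl i i v; rewrite eqxx mulr1 -mulr2n -scaler_nat.
move=> /(congr1 (fun z => 2%:R^-1 *: z)).
by rewrite scalerN !scalerA mulVf ?pnatr_eq0 // !scale1r.
Qed.

Lemma cliff_anti i j v : i != j -> e i (e j v) = - e j (e i v).
Proof.
move=> /negbTE ij; have := he_cl i j v; rewrite ij mulr0 scale0r oppr0 => /eqP.
by rewrite addr_eq0 => /eqP.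
Qed.

Lemma shift_up_ne i j b : j != i -> shift_up i b j = b j.
Proof. by rewrite /shift_up => /negbTE ->. Qed.

Lemma shift_up_eq i b : shift_up i b i = (b i).+1.
Proof. by rewrite /shift_up eqxx. Qed.

Lemma shift_down_ne i j b : j != i -> shift_down i b j = b j.
Proof. by rewrite /shift_down => /negbTE ->. Qed.

Lemma shift_down_eq i b : shift_down i b i = (b i).-1.
Proof. by rewrite /shift_down eqxx. Qed.

Lemma shift_upK i : cancel (shift_up i) (shift_down i).
Proof.
by move=> b; apply/boolp.funext => j; rewrite /shift_down /shift_up; case: eqP => // ->.
Qed.

Lemma shift_downK i b : (0 < b i)%N -> shift_up i (shift_down i b) = b.
Proof.
move=> hb; apply/boolp.funext => j; rewrite /shift_down /shift_up.
by case: eqP => // ->; rewrite prednK.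
Qed.

Lemma shift_upC i j b : shift_up i (shift_up j b) = shift_up j (shift_up i b).
Proof.
by apply/boolp.funext => k; rewrite /shift_up; case: eqP => [->|]; case: eqP => // ->.
Qed.

Lemma shift_downC i j b : shift_down i (shift_down j b) = shift_down j (shift_down i b).
Proof.
by apply/boolp.funext => k; rewrite /shift_down; case: eqP => [->|]; case: eqP => // ->.
Qed.

Lemma shift_up_downC i j b : i != j -> shift_up i (shift_down j b) = shift_down j (shift_up i b).
Proof.
move=> ij; apply/boolp.funext => k; rewrite /shift_down /shift_up.
by case: (k =P i) => [ki|ki]; case: (k =P j) => [kj|kj] //; move: ij; rewrite -ki -kj eqxx.
Qed.

(* [T_i] maps [x^(b + e_i)] to a multiple of [x^b]: the factor is [b_i + 1] from the
   derivative, plus [2 mu_i] from the difference part when [b_i + 1] is odd. *)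
Definition dunkl_coef i (k : nat) : R := k.+1%:R + mu i * (1 - (-1) ^+ k.+1).

Lemma dunklE i f b : dunkl mu i f b = dunkl_coef i (b i) *: f (shift_up i b).
Proof.
rewrite /dunkl /padd /pderiv /pscale /divx /psub /refl shift_up_eq /dunkl_coef.
by rewrite scalerDl -scalerA scalerBl scale1r.
Qed.

Lemma dunkl_coefSS i k : dunkl_coef i k.+2 = dunkl_coef i k + 2%:R.
Proof. rewrite /dunkl_coef !exprS; ring. Qed.

Lemma dunkl_coef1 i : dunkl_coef i 1 = 2%:R.
Proof. rewrite /dunkl_coef !exprS expr0; ring. Qed.

Definition refl_sign X b : R := \prod_(j in X) (-1) ^+ (b j).

Lemma reflAE X f b : reflA X f b = refl_sign X b *: f b.
Proof.
rewrite /reflA /refl_sign -big_enum; elim: (enum X) => [|j s IH] /=.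
  by rewrite big_nil scale1r.
by rewrite /refl IH big_cons scalerA.
Qed.

Lemma refl_sign_up_in X i b : i \in X -> refl_sign X (shift_up i b) = - refl_sign X b.
Proof.
move=> iX; rewrite /refl_sign (bigD1 i iX) [in RHS](bigD1 i iX) /= shift_up_eq exprS mulN1r.
by rewrite mulNr; congr (- (_ * _)); apply: eq_bigr => j /andP [_ ji]; rewrite shift_up_ne.
Qed.

Lemma refl_sign_up_notin X i b : i \notin X -> refl_sign X (shift_up i b) = refl_sign X b.
Proof.
move=> iX; apply: eq_bigr => j jX; rewrite shift_up_ne //.
by apply: contraNneq iX => <-.
Qed.

Lemma cl_padd i f g : cl e i (padd f g) = padd (cl e i f) (cl e i g).
Proof. by apply/boolp.funext => b; rewrite /cl /padd cliffD. Qed.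

Lemma mulx_padd i f g : mulx i (padd f g) = padd (mulx i f) (mulx i g).
Proof. by apply/boolp.funext => b; rewrite /mulx /padd; case: ifP; rewrite ?addr0. Qed.

Lemma dunkl_padd i f g : dunkl mu i (padd f g) = padd (dunkl mu i f) (dunkl mu i g).
Proof. by apply/boolp.funext => b; rewrite /padd !dunklE /padd scalerDr. Qed.

Lemma reflA_padd X f g : reflA X (padd f g) = padd (reflA X f) (reflA X g).
Proof. by apply/boolp.funext => b; rewrite /padd !reflAE /padd scalerDr. Qed.

Lemma pscale_padd (a : R) f g : pscale a (padd f g) = padd (pscale a f) (pscale a g).
Proof. by apply/boolp.funext => b; rewrite /padd /pscale scalerDr. Qed.

Definition Eop i : pvEnd := PVEnd (cl_padd i).
Definition Xop i : pvEnd := PVEnd (mulx_padd i).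
Definition Top i : pvEnd := PVEnd (dunkl_padd i).
Definition Rop X : pvEnd := PVEnd (reflA_padd X).
Definition Hop : pvEnd := PVEnd (pscale_padd 2%:R^-1).

Lemma half_add_half : (2%:R : R)^-1 + 2%:R^-1 = 1.
Proof. by field. Qed.

Lemma Hop_half : Hop + Hop = 1.
Proof. by apply: pvEnd_ext => f b /=; rewrite /pscale -scalerDl half_add_half scale1r. Qed.

Lemma Hop_central a : comm Hop a.
Proof.
have halfK f : padd (pscale 2%:R^-1 f) (pscale 2%:R^-1 f) = f.
  by apply/boolp.funext => b; rewrite /padd /pscale -scalerDl half_add_half scale1r.
apply: pvEnd_ext => f b /=.
have := congr1 (fun g => g b) (pvEnd_padd a (pscale 2%:R^-1 f) (pscale 2%:R^-1 f)).
rewrite halfK /padd /pscale => ->.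
by rewrite -mulr2n -scaler_nat scalerA mulVf ?pnatr_eq0 // scale1r.
Qed.

Lemma Eop_sqr i : Eop i * Eop i = -1.
Proof. by apply: pvEnd_ext => f b /=; rewrite /cl cliff_sqr. Qed.

Lemma anticomm_Eop i j : i != j -> anticomm (Eop i) (Eop j).
Proof. by move=> ij; apply: pvEnd_ext => f b /=; rewrite /cl cliff_anti. Qed.

Lemma comm_Eop_Xop i j : comm (Eop i) (Xop j).
Proof. by apply: pvEnd_ext => f b /=; rewrite /cl /mulx; case: ifP; rewrite ?cliff0. Qed.

Lemma comm_Eop_Top i j : comm (Eop i) (Top j).
Proof. by apply: pvEnd_ext => f b /=; rewrite /cl !dunklE cliffZ. Qed.

Lemma comm_Xop i j : comm (Xop i) (Xop j).
Proof.
have [->|ij] := eqVneq i j; first exact: commr_refl.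
have ji : j != i by rewrite eq_sym.
apply: pvEnd_ext => f b /=; rewrite /mulx (shift_down_ne _ ij) (shift_down_ne _ ji).
by case: ifP; case: ifP; rewrite // shift_downC.
Qed.

Lemma comm_Top i j : comm (Top i) (Top j).
Proof.
have [->|ij] := eqVneq i j; first exact: commr_refl.
have ji : j != i by rewrite eq_sym.
apply: pvEnd_ext => f b /=; rewrite !dunklE !scalerA (shift_up_ne _ ij) (shift_up_ne _ ji).
by rewrite mulrC shift_upC.
Qed.

Lemma comm_Xop_Top i j : i != j -> comm (Xop i) (Top j).
Proof.
move=> ij; have ji : j != i by rewrite eq_sym.
apply: pvEnd_ext => f b /=; rewrite /mulx !dunklE /mulx (shift_up_ne _ ij).
case: ifP => _; last by rewrite scaler0.
by rewrite (shift_down_ne _ ji) shift_up_downC.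
Qed.

Lemma Top_Xop_sqr i : Top i * Xop i * Xop i - Xop i * Xop i * Top i = Xop i + Xop i.
Proof.
apply: pvEnd_ext => f b /=; rewrite !dunklE /mulx shift_up_eq /= shift_upK shift_down_eq.
case E: (b i) => [|[|k]] /=; first by rewrite !scaler0 subr0 addr0.
  by rewrite dunkl_coef1 scaler_nat mulr2n subr0.
rewrite dunklE shift_downK; last by rewrite shift_down_eq E.
by rewrite !shift_down_eq E -scalerBl dunkl_coefSS addrAC subrr add0r scaler_nat mulr2n.
Qed.

Lemma Top_sqr_Xop i : Top i * Top i * Xop i - Xop i * Top i * Top i = Top i + Top i.
Proof.
apply: pvEnd_ext => f b /=; rewrite !dunklE /mulx shift_up_eq /= shift_upK.
case E: (b i) => [|k] /=.
  by rewrite subr0 shift_up_eq /= dunkl_coef1 scaler_nat mulr2n scalerDr.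
rewrite shift_up_eq /= !dunklE shift_downK ?E // shift_down_eq E /= !scalerA.
rewrite -scalerBl -scalerDl.
by rewrite dunkl_coefSS; congr (_ *: _); ring.
Qed.

Lemma Rop_sqr X : Rop X * Rop X = 1.
Proof.
apply: pvEnd_ext => f b /=; rewrite !reflAE scalerA /refl_sign -big_split /=.
by rewrite big1 ?scale1r // => j _; rewrite -expr2 sqrr_sign.
Qed.

Lemma comm_Rop X Y : comm (Rop X) (Rop Y).
Proof. by apply: pvEnd_ext => f b /=; rewrite !reflAE !scalerA mulrC. Qed.

Lemma RopU X Y : [disjoint X & Y] -> Rop (X :|: Y) = Rop X * Rop Y.
Proof.
move=> dXY; apply: pvEnd_ext => f b /=.
by rewrite !reflAE scalerA /refl_sign big_setU_disjoint.
Qed.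

Lemma comm_Rop_Eop X i : comm (Rop X) (Eop i).
Proof. by apply: pvEnd_ext => f b /=; rewrite /cl !reflAE cliffZ. Qed.

Lemma anticomm_Rop_Top X i : i \in X -> anticomm (Rop X) (Top i).
Proof.
move=> iX; apply: pvEnd_ext => f b /=; rewrite reflAE !dunklE reflAE refl_sign_up_in //.
by rewrite !scalerA mulrN scaleNr opprK mulrC.
Qed.

Lemma comm_Rop_Top X i : i \notin X -> comm (Rop X) (Top i).
Proof.
move=> iX; apply: pvEnd_ext => f b /=; rewrite reflAE !dunklE reflAE refl_sign_up_notin //.
by rewrite !scalerA mulrC.
Qed.

Lemma anticomm_Rop_Xop X i : i \in X -> anticomm (Rop X) (Xop i).
Proof.
move=> iX; apply: pvEnd_ext => f b /=; rewrite reflAE /mulx.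
case: ifP => hb; last by rewrite scaler0 oppr0.
by rewrite reflAE -{1}(shift_downK hb) refl_sign_up_in // scaleNr.
Qed.

Lemma comm_Rop_Xop X i : i \notin X -> comm (Rop X) (Xop i).
Proof.
move=> iX; apply: pvEnd_ext => f b /=; rewrite reflAE /mulx.
case: ifP => hb; last by rewrite scaler0.
by rewrite reflAE -{1}(shift_downK hb) refl_sign_up_notin.
Qed.

Lemma anticomm_EXop i j : i != j -> anticomm (Eop i * Xop i) (Eop j * Xop j).
Proof.
by move=> ij; apply: anticomm_mul_pair;
  [exact: anticomm_Eop|exact/commr_sym/comm_Eop_Xop|exact/commr_sym/comm_Eop_Xop|exact: comm_Xop].
Qed.

Lemma anticomm_ETop i j : i != j -> anticomm (Eop i * Top i) (Eop j * Top j).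
Proof.
by move=> ij; apply: anticomm_mul_pair;
  [exact: anticomm_Eop|exact/commr_sym/comm_Eop_Top|exact/commr_sym/comm_Eop_Top|exact: comm_Top].
Qed.

Lemma anticomm_EXop_ETop i j : i != j -> anticomm (Eop i * Xop i) (Eop j * Top j).
Proof.
by move=> ij; apply: anticomm_mul_pair;
  [exact: anticomm_Eop|exact/commr_sym/comm_Eop_Xop|exact/commr_sym/comm_Eop_Top|exact: comm_Xop_Top].
Qed.

Lemma EXop_ETop_osp i :
  [/\ (Eop i * Xop i) * (Eop i * Xop i) * (Eop i * Top i)
        - (Eop i * Top i) * (Eop i * Xop i) * (Eop i * Xop i) = Eop i * Xop i + Eop i * Xop i
    & (Eop i * Top i) * (Eop i * Top i) * (Eop i * Xop i)
        - (Eop i * Xop i) * (Eop i * Top i) * (Eop i * Top i) = - (Eop i * Top i + Eop i * Top i)].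
Proof.
have hX : comm (Xop i) (Eop i) by exact/commr_sym/comm_Eop_Xop.
have hT : comm (Top i) (Eop i) by exact/commr_sym/comm_Eop_Top.
rewrite !mulr3_sqrN1 ?Eop_sqr // !opprK; split; rewrite addrC.
  by rewrite -mulrBr Top_Xop_sqr mulrDr.
by rewrite -opprB -mulrBr Top_sqr_Xop mulrDr.
Qed.

Definition xop X : pvEnd := \sum_(i in X) Eop i * Xop i.
Definition Dop X : pvEnd := \sum_(i in X) Eop i * Top i.
Definition Gop X : pvEnd := Sop Hop (xop X) (Dop X) * Rop X.

Lemma pvEnd_sumE (I : finType) (P : pred I) (F : I -> pvEnd) f b :
  (\sum_(i | P i) F i) f b = \sum_(i | P i) F i f b.
Proof. exact: (big_morph (fun a : pvEnd => a f b)). Qed.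

Lemma xopE X f : xop X f = xA e X f.
Proof. by apply/boolp.funext => b; rewrite pvEnd_sumE. Qed.

Lemma DopE X f : Dop X f = DA mu e X f.
Proof. by apply/boolp.funext => b; rewrite pvEnd_sumE. Qed.

Lemma Gamma_Gop X f : Gamma mu e X f = Gop X f.
Proof. by apply/boolp.funext => b; rewrite /Gamma /Gop /SA /pscale /psub /= !xopE !DopE. Qed.

Lemma xopU X Y : [disjoint X & Y] -> xop (X :|: Y) = xop X + xop Y.
Proof. exact: big_setU_disjoint. Qed.

Lemma DopU X Y : [disjoint X & Y] -> Dop (X :|: Y) = Dop X + Dop Y.
Proof. exact: big_setU_disjoint. Qed.

Lemma anticomm_xop X Y : [disjoint X & Y] -> anticomm (xop X) (xop Y).
Proof. by move=> dXY; apply: anticomm_sum => i j iX jY; apply/anticomm_EXop/(disjoint_neq dXY). Qed.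

Lemma anticomm_Dop X Y : [disjoint X & Y] -> anticomm (Dop X) (Dop Y).
Proof. by move=> dXY; apply: anticomm_sum => i j iX jY; apply/anticomm_ETop/(disjoint_neq dXY). Qed.

Lemma anticomm_xop_Dop X Y : [disjoint X & Y] -> anticomm (xop X) (Dop Y).
Proof.
by move=> dXY; apply: anticomm_sum => i j iX jY; apply/anticomm_EXop_ETop/(disjoint_neq dXY).
Qed.

Lemma anticomm_Rop_xop X : anticomm (Rop X) (xop X).
Proof.
by apply: anticommr_sum => i iX; apply: anticommrMr; [exact: comm_Rop_Eop|exact: anticomm_Rop_Xop].
Qed.

Lemma anticomm_Rop_Dop X : anticomm (Rop X) (Dop X).
Proof.
by apply: anticommr_sum => i iX; apply: anticommrMr; [exact: comm_Rop_Eop|exact: anticomm_Rop_Top].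
Qed.

Lemma comm_Rop_xop X Y : [disjoint X & Y] -> comm (Rop X) (xop Y).
Proof.
move=> dXY; apply: commr_sum => i iY; apply: commrM; first exact: comm_Rop_Eop.
by apply: comm_Rop_Xop; rewrite (disjointFl dXY iY).
Qed.

Lemma comm_Rop_Dop X Y : [disjoint X & Y] -> comm (Rop X) (Dop Y).
Proof.
move=> dXY; apply: commr_sum => i iY; apply: commrM; first exact: comm_Rop_Eop.
by apply: comm_Rop_Top; rewrite (disjointFl dXY iY).
Qed.

Lemma xop_osp X : xop X * xop X * Dop X - Dop X * xop X * xop X = xop X + xop X.
Proof.
rewrite /xop /Dop -!big_enum sum_osp ?enum_uniq //; last first.
- by move=> i j _ _; apply: anticomm_EXop_ETop.
- by move=> i j _ _; apply: anticomm_EXop.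
by rewrite -big_split; apply: eq_bigr => i _; case: (EXop_ETop_osp i).
Qed.

Lemma Dop_osp X : xop X * Dop X * Dop X - Dop X * Dop X * xop X = Dop X + Dop X.
Proof.
rewrite /xop /Dop -!big_enum -opprB sum_osp ?enum_uniq //; last first.
- by move=> i j _ _ ij; apply/anticommr_sym/anticomm_EXop_ETop; rewrite eq_sym.
- by move=> i j _ _; apply: anticomm_ETop.
rewrite -big_split -sumrN; apply: eq_bigr => i _.
by case: (EXop_ETop_osp i) => _ ->; rewrite opprK.
Qed.

Lemma Gop_anticomm (A B : {set 'I_n}) :
  Gop A * Gop B + Gop B * Gop A =
  Gop ((A :|: B) :\: (A :&: B)) + 2%:R * (Gop (A :&: B) * Gop (A :|: B))
  + 2%:R * (Gop (A :\: (A :&: B)) * Gop (B :\: (A :&: B))).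
Proof.
set C := A :&: B; set P := A :\: C; set Q := B :\: C.
have [eA eB eU eS] : [/\ A = P :|: C, B = C :|: Q, A :|: B = P :|: C :|: Q
                      & (A :|: B) :\: C = P :|: Q].
  by split; apply/setP => i; rewrite !inE; case: (i \in A); case: (i \in B).
have [dPC dCQ dPQ dPCQ] : [/\ [disjoint P & C], [disjoint C & Q], [disjoint P & Q]
                           & [disjoint P :|: C & Q]].
  by split; rewrite -setI_eq0; apply/eqP/setP => i; rewrite !inE;
    case: (i \in A); case: (i \in B).
rewrite eS eU eA eB /Gop !xopU ?DopU ?RopU //.
apply: (three_block_identity Hop_central Hop_half);
  first [exact: Rop_sqr | exact: comm_Rop | exact: anticomm_Rop_xop | exact: anticomm_Rop_Dop
        | exact: xop_osp | exact: Dop_osp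
        | (apply: comm_Rop_xop || apply: comm_Rop_Dop || apply: anticomm_xop
           || apply: anticomm_Dop || apply: anticomm_xop_Dop); by rewrite // disjoint_sym].
Qed.

End DunklOperators.

Unset Implicit Arguments.

Theorem proposition4 (R : realFieldType) (n : nat) (V : lmodType R)
  (mu : 'I_n -> R) (e : 'I_n -> V -> V)
  (hn : (0 < n)%N)
  (hmu : forall i, 0 < mu i)
  (he_lin : forall i (a : R) (u v : V), e i (a *: u + v) = a *: e i u + e i v)
  (he_cl : forall i j (v : V), e i (e j v) + e j (e i v) = - ((2 * (i == j)%:R) *: v))
  (A B : {set 'I_n}) (f : PV n V) (hf : finsupp f) :
  padd (Gamma mu e A (Gamma mu e B f)) (Gamma mu e B (Gamma mu e A f)) =
  padd (Gamma mu e ((A :|: B) :\: (A :&: B)) f)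
    (padd (pscale 2%:R (Gamma mu e (A :&: B) (Gamma mu e (A :|: B) f)))
          (pscale 2%:R (Gamma mu e (A :\: (A :&: B)) (Gamma mu e (B :\: (A :&: B)) f)))).
Proof.
rewrite !(Gamma_Gop mu he_lin); apply/boolp.funext => b.
have K := congr1 (fun M : pvEnd n V => M f b) (Gop_anticomm mu he_lin he_cl A B).
rewrite !mulr_natl !mulr2n !pvEnd_addE in K.
by rewrite /padd /pscale !scaler_nat !mulr2n addrA; exact: K.
Qed.
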